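(* For any object $(E,\sigma)$ of $\mathrm{OS}_B$, every upward-closed subset (ideal) of the poset $E^\star$ is an ordered language on the alphabet $E$.
   Context: An object of $\mathrm{OS}_B$ is a pair $(E,\sigma)$ with $E$ a totally ordered finite set and $\sigma$ an order-reversing involution with a unique fixed point; $-e:=\sigma(e)$. $E^\star$ is the set of finite words in $E$ with the partial order: $e_1\cdots e_m\le f_1\cdots f_n$ iff there is a strictly increasing $\theta:[m]\to[n]$ with $e_i=f_{\theta(i)}$ for all $i$ and, for each $j\in[n]$, some $i$ with $\theta(i)\le j$ and $f_{\theta(i)}\in\{\pm f_j\}$. For a finite set $\Sigma$, a language is a subset of $\Sigma^\star$; the concatenation of two languages is the set of concatenations of a word of the first with a word of the second. The ordered languages on $\Sigma$ form the smallest collection of languages containing all singleton languages $\{w\}$ and all languages $\Pi^\star$ for $\Pi\subset\Sigma$, and closed under finite unions and concatenations. *)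

From mathcomp Require Import all_boot all_order.
Set Implicit Arguments. Unset Strict Implicit. Unset Printing Implicit Defensive.
Import Order.TTheory.
Local Open Scope order_scope.

Definition OSB_involution (d : Order.disp_t) (E : finOrderType d) (sigma : E -> E) : Prop :=
  [/\ involutive sigma,
      (forall x y : E, x <= y -> sigma y <= sigma x)
    & exists! e : E, sigma e = e].

Local Close Scope order_scope.

(* Positions are 0-based; onth gives None out of range. *)
Definition word_le (E : eqType) (sigma : E -> E) (u w : seq E) : Prop :=
  exists theta : nat -> nat,
    [/\ (forall i j, i < j -> j < size u -> theta i < theta j),
        (forall i, i < size u -> theta i < size w /\ onth u i = onth w (theta i))
      & (forall j, j < size w -> exists2 i, i < size u &
            theta i <= j /\ (onth w (theta i) = onth w j
                             \/ onth w (theta i) = omap sigma (onth w j)))].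

Definition language (S : Type) := seq S -> Prop.

Inductive ordered_lang (S : finType) : language S -> Prop :=
  | ol_single (w : seq S) : ordered_lang (fun x => x = w)
  | ol_star (Pi : {set S}) : ordered_lang (fun x => all (fun a => a \in Pi) x)
  | ol_empty : ordered_lang (fun _ => False)
  | ol_union (L1 L2 : language S) :
      ordered_lang L1 -> ordered_lang L2 -> ordered_lang (fun x => L1 x \/ L2 x)
  | ol_cat (L1 L2 : language S) :
      ordered_lang L1 -> ordered_lang L2 ->
      ordered_lang (fun x => exists u v, [/\ L1 u, L2 v & x = u ++ v]).

Definition is_ordered_language (S : finType) (L : language S) : Prop :=
  exists2 L' : language S, ordered_lang L' & forall x, L x <-> L' x.

Definition upward_closed (T : Type) (le : T -> T -> Prop) (I : T -> Prop) : Prop :=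
  forall u w, I u -> le u w -> I w.

From mathcomp Require Import all_boot all_order.
From mathcomp Require Import zify.
From Stdlib Require Import Classical ClassicalEpsilon.
Set Implicit Arguments. Unset Strict Implicit. Unset Printing Implicit Defensive.

(* We introduce a combinatorial sub-relation of word_le, the
   "anchored embedding" [anchored C u w]: w is obtained from u by inserting,
   left to right, letters a such that a or sigma a already occurs in C or among
   the letters of u matched so far.  Then:
   1. anchored set0 u w implies word_le sigma u w, and for fixed u the set
      {w | anchored C u w} is an ordered language: for u = a :: u' it is
      (allowed C)^* . {a} . {w | anchored (a |: C) u' w}.
   2. anchored set0 is a well-quasi-order (every infinite sequence has a good
      pair), by induction on the number of letters outside C, using Higman's
      lemma (subsequence is a wqo on words over a finite alphabet, proved by
      the minimal bad sequence argument) and the product of wqos.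
   3. In a wqo, every subset I has a finite basis B with I = upset of B.
   Hence an ideal I is the finite union of the anchored upsets of its basis
   elements: it contains them by upward closure and step 1, and is covered by
   them by step 3. *)

Section WordEmbedding.
Variables (E : eqType) (sigma : E -> E).

Lemma onth_rcons_lt (s : seq E) a i : i < size s -> onth (rcons s a) i = onth s i.
Proof. by move=> h; rewrite -cats1 onth_cat h. Qed.

Lemma onth_rcons_size (s : seq E) a : onth (rcons s a) (size s) = Some a.
Proof. by rewrite -cats1 onth_cat ltnn subnn. Qed.

Lemma word_le_nil : word_le sigma [::] [::].
Proof. by exists id; split=> // i. Qed.

Lemma word_le_rcons_match pu pw a : word_le sigma pu pw ->
  word_le sigma (rcons pu a) (rcons pw a).
Proof.
case=> th [th_inc th_val th_cov].
exists (fun i => if i == size pu then size pw else th i); split.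
- move=> i j ij; rewrite size_rcons ltnS => jle.
  rewrite ifN_eq; last by apply/eqP=> e; lia.
  case: (j =P size pu) => [jE|/eqP jN]; last by apply: th_inc; lia.
  by case: (th_val i); lia.
- move=> i; rewrite !size_rcons ltnS leq_eqVlt => /orP[/eqP ->|il].
    by rewrite eqxx !onth_rcons_size.
  rewrite ifN_eq; last by apply/eqP=> e; lia.
  by have [h1 h2] := th_val i il; rewrite !onth_rcons_lt //; split=> //; lia.
- move=> j; rewrite size_rcons ltnS leq_eqVlt => /orP[/eqP ->|jl].
    by exists (size pu); rewrite ?size_rcons ?eqxx //; split=> //; left.
  have [i il [hle hor]] := th_cov j jl.
  exists i; first by rewrite size_rcons; lia.
  rewrite ifN_eq; last by apply/eqP=> e; lia.
  by rewrite !onth_rcons_lt //; lia.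
Qed.

(* Appending to the larger word a letter a such that a or sigma a already
   occurs in the smaller word: the new position is covered by that occurrence. *)
Lemma word_le_rcons_skip pu pw a x : word_le sigma pu pw -> x \in pu ->
  x = a \/ x = sigma a -> word_le sigma pu (rcons pw a).
Proof.
case=> th [th_inc th_val th_cov] xin hx; exists th; split=> //.
- move=> i il; have [h1 h2] := th_val i il.
  by rewrite size_rcons onth_rcons_lt //; split=> //; lia.
- move=> j; rewrite size_rcons ltnS leq_eqVlt => /orP[/eqP ->|jl].
    have [i hi] := onthP xin.
    have il : i < size pu by rewrite -onthTE hi.
    have [h1 h2] := th_val i il.
    exists i => //; split; first by lia.
    rewrite onth_rcons_lt // onth_rcons_size -h2 hi /=.
    by case: hx => ->; [left|right].
  have [i il [hle hor]] := th_cov j jl; have [h1 _] := th_val i il.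
  by exists i => //; split=> //; rewrite !onth_rcons_lt.
Qed.
End WordEmbedding.

(* Anchored embeddings: C records the letters of u matched so far; an inserted
   letter must be allowed, i.e. it or its sigma-image lies in C. *)
Section Anchored.
Variables (E : finType) (sigma : E -> E).

Definition allowed (C : {set E}) (a : E) := (a \in C) || (sigma a \in C).

Inductive anchored : {set E} -> seq E -> seq E -> Prop :=
| anchored_nil C : anchored C [::] [::]
| anchored_skip C u a w : allowed C a -> anchored C u w -> anchored C u (a :: w)
| anchored_match C u a w : anchored (a |: C) u w -> anchored C (a :: u) (a :: w).

Lemma anchored_mono (C C' : {set E}) u w :
  C \subset C' -> anchored C u w -> anchored C' u w.
Proof.
move=> sub r; elim: r C' sub => {C u w} [C|C u a w ok _ IH|C u a w _ IH] C' sub.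
- exact: anchored_nil.
- apply: anchored_skip; last exact: IH.
  by case/orP: ok => h; apply/orP; [left|right]; apply: (subsetP sub).
- by apply: anchored_match; apply: IH; apply: setUS.
Qed.

(* Soundness: anchored embeddings extend a word embedding whose smaller word
   contains the anchor set; in particular anchored set0 is below word_le. *)
Lemma anchored_word_le C u w pu pw : anchored C u w -> word_le sigma pu pw ->
  {subset C <= pu} -> word_le sigma (pu ++ u) (pw ++ w).
Proof.
move=> r; elim: r pu pw => {C u w} [C|C u a w ok _ IH|C u a w _ IH] pu pw hw hC.
- by rewrite !cats0.
- rewrite -cat_rcons; apply: IH => //.
  case/orP: ok => h.
    by apply: (word_le_rcons_skip (x:=a)) => //; [apply: hC|left].
  by apply: (word_le_rcons_skip (x:=sigma a)) => //; [apply: hC|right].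
- rewrite -!cat_rcons; apply: IH; first exact: word_le_rcons_match.
  move=> x; rewrite in_setU1 mem_rcons in_cons => /orP[->//|/hC ->].
  by rewrite orbT.
Qed.

Lemma anchored_nilP C w : anchored C [::] w <-> all (allowed C) w.
Proof.
split.
  by move E0: [::] => u r; elim: r E0 => //= {}C {}u a {}w ok _ IH /IH ->; rewrite ok.
elim: w => [|a w IH] /=; first by move=> _; apply: anchored_nil.
by case/andP=> ok /IH; apply: anchored_skip.
Qed.

Lemma anchored_consP C a u w : anchored C (a :: u) w <->
  exists x y, [/\ all (allowed C) x, anchored (a |: C) u y & w = x ++ a :: y].
Proof.
split.
  move Eu: (a :: u) => v0 r.
  elim: r a u Eu => [//|{}C v b {}w ok _ IH|{}C v b {}w r _] a' u' Eu.
    have [x [y [hx hy ->]]] := IH a' u' Eu.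
    by exists (b :: x), y; split=> //=; rewrite ok hx.
  by case: Eu => -> ->; exists [::], w.
case=> x [y [hx hy ->]]; elim: x hx => [|b x IH] /=.
  by move=> _; apply: anchored_match.
by case/andP=> ok /IH; apply: anchored_skip.
Qed.

Lemma anchored_upset_ordered u C :
  is_ordered_language (fun w => anchored C u w).
Proof.
have allowed_star D : forall w,
    all (allowed D) w = all (fun a => a \in [set b | allowed D b]) w.
  by move=> w; apply: eq_all => b; rewrite inE.
elim: u C => [|a u IH] C.
  exists (fun x => all (fun a => a \in [set b | allowed C b]) x).
    exact: ol_star.
  by move=> w; rewrite anchored_nilP allowed_star.
have [L hL hLe] := IH (a |: C).
eexists; first apply: ol_cat; [exact: (ol_star [set b | allowed C b])|
   apply: ol_cat; [exact: (ol_single [:: a])|exact: hL]|].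
move=> w; rewrite anchored_consP; split.
- case=> x [y [hx hy ->]]; exists x, (a :: y).
  by rewrite -allowed_star; split=> //; exists [:: a], y; split=> //; apply/hLe.
- case=> x [v [hx [x2 [y [-> hy ->]]] ->]]; exists x, y.
  by rewrite allowed_star; split=> //; apply/hLe.
Qed.

Lemma anchored_prefix C B B' x y : subseq B B' -> all (allowed C) B' ->
  anchored C x y -> anchored C (B ++ x) (B' ++ y).
Proof.
elim: B' B C => [|c B' IH] B C; first by rewrite subseq0 => /eqP ->.
move=> sBB' /= /andP[okc okB] r.
case: B sBB' => [_|b B] /=.
  by apply: anchored_skip => //; apply: (IH [::]) => //; apply: sub0seq.
case: eqP => [<- s|_ s]; last by apply: anchored_skip => //; apply: (IH (b :: B)).
apply: anchored_match; apply: anchored_mono (IH _ _ s okB r).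
exact: subsetUr.
Qed.

Lemma split_first_disallowed C w : ~~ all (allowed C) w ->
  exists p : seq E * E * seq E,
   [/\ w = p.1.1 ++ p.1.2 :: p.2, all (allowed C) p.1.1 & ~~ allowed C p.1.2].
Proof.
elim: w => [//|c w IH] /=; rewrite negb_and.
case okc : (allowed C c) => /= h; last by exists ([::], c, w); rewrite okc.
have [[[B a] r] [e1 e2 e3]] := IH h.
by exists (c :: B, a, r); rewrite /= e1 okc e2.
Qed.
End Anchored.

Definition wqo (T : Type) (R : T -> T -> Prop) :=
  forall f : nat -> T, exists i j, i < j /\ R (f i) (f j).

Section InfiniteSequences.

Lemma least_witness (P : nat -> Prop) n : P n ->
  exists m, P m /\ forall k, P k -> m <= k.
Proof.
move=> Pn; pose p k : bool := excluded_middle_informative (P k).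
have pP k : reflect (P k) (p k).
  by rewrite /p; case: excluded_middle_informative => h; constructor.
have exp : exists k, p k by exists n; apply/pP.
case: (ex_minnP exp) => m /pP Pm minm.
by exists m; split=> // k /pP /minm.
Qed.

Lemma infinitely_often_subseq (P : nat -> Prop) :
  (forall N, exists n, N <= n /\ P n) ->
  exists phi : nat -> nat, (forall k, phi k < phi k.+1) /\ forall k, P (phi k).
Proof.
move=> H.
pose c N := proj1_sig (constructive_indefinite_description _ (H N)).
have hc N : N <= c N /\ P (c N) :=
  proj2_sig (constructive_indefinite_description _ (H N)).
pose phi := fix phi k := if k is k'.+1 then c (phi k').+1 else c 0.
exists phi; split; first by move=> k /=; case: (hc (phi k).+1).
by case=> [|k] /=; [case: (hc 0)|case: (hc (phi k).+1)].
Qed.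

Lemma infinitely_often_or_eventually_not (P : nat -> Prop) :
  (forall N, exists n, N <= n /\ P n) \/ (exists N, forall n, N <= n -> ~ P n).
Proof.
case: (classic (forall N, exists n, N <= n /\ P n)) => [h|h]; [by left|right].
apply: NNPP => h2; apply: h => N; apply: NNPP => h3; apply: h2.
by exists N => n Nn Pn; apply: h3; exists n.
Qed.

Lemma infinite_pigeonhole (T : finType) (f : nat -> T) :
  exists a, forall N, exists n, N <= n /\ f n = a.
Proof.
apply: NNPP => H.
have finitely a : exists N, forall n, N <= n -> f n <> a.
  case: (infinitely_often_or_eventually_not (fun n => f n = a)) => // h.
  by case: H; exists a.
have avoid (s : seq T) : exists N, forall n, N <= n -> f n \notin s.
  elim: s => [|a s [N hN]]; first by exists 0.
  have [M hM] := finitely a.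
  exists (maxn N M) => n; rewrite geq_max => /andP[h1 h2].
  by rewrite in_cons negb_or hN // andbT; apply/eqP/hM.
by have [N /(_ N (leqnn N))] := avoid (enum T); rewrite mem_enum.
Qed.

Lemma wqo_good_pair_in T (R : T -> T -> Prop) (f : nat -> T) (P : nat -> Prop) :
  wqo R -> (forall N, exists n, N <= n /\ P n) ->
  exists i j, [/\ i < j, P i, P j & R (f i) (f j)].
Proof.
move=> W /infinitely_often_subseq [phi [inc hphi]].
have [k [l [kl r]]] := W (fun k => f (phi k)).
by exists (phi k), (phi l); split=> //; apply: (homo_ltn ltn_trans inc).
Qed.

(* Pairs of sequences: a transitive wqo admits an infinite chain, along which
   the second wqo finds a good pair. *)
Lemma wqo_prod T1 T2 (R1 : T1 -> T1 -> Prop) (R2 : T2 -> T2 -> Prop) :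
  wqo R1 -> (forall y x z, R1 x y -> R1 y z -> R1 x z) -> wqo R2 ->
  forall (g : nat -> T1) (h : nat -> T2),
  exists i j, [/\ i < j, R1 (g i) (g j) & R2 (h i) (h j)].
Proof.
move=> W1 tr W2 g h.
pose terminal i := ~ exists j, i < j /\ R1 (g i) (g j).
case: (infinitely_often_or_eventually_not terminal) => [inf|[N hN]].
  have [i [j [ij Ti _ r]]] := wqo_good_pair_in g W1 inf.
  by case: Ti; exists j.
have H n : exists j, N <= n -> n < j /\ R1 (g n) (g j).
  case: (leqP N n) => Nn; last by exists 0.
  by have /NNPP [j hj] := hN n Nn; exists j.
pose nx n := proj1_sig (constructive_indefinite_description _ (H n)).
have hnx n : N <= n -> n < nx n /\ R1 (g n) (g (nx n)) :=
  proj2_sig (constructive_indefinite_description _ (H n)).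
pose psi := fix psi k := if k is k'.+1 then nx (psi k') else N.
have psiN k : N <= psi k by elim: k => //= k IH; case: (hnx _ IH); lia.
have chain : {homo (fun k => g (psi k)) : k l / k < l >-> R1 k l}.
  by apply: homo_ltn tr _ => k; case: (hnx _ (psiN k)).
have inc : {homo psi : k l / k < l}.
  by apply: homo_ltn ltn_trans _ => k; case: (hnx _ (psiN k)).
have [k [l [kl r]]] := W2 (fun k => h (psi k)).
by exists (psi k), (psi l); split=> //; [apply: inc|apply: chain].
Qed.
End InfiniteSequences.

(* Higman's lemma for the subsequence order, by Nash-Williams' minimal bad
   sequence argument. *)
Section Higman.
Variable E : finType.

Definition bad (f : nat -> seq E) := forall i j, i < j -> ~~ subseq (f i) (f j).

Definition extendable (l : seq (seq E)) :=
  exists f, bad f /\ forall i, i < size l -> f i = nth [::] l i.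

Lemma shortest_extension l : extendable l -> exists w, extendable (rcons l w) /\
  forall w', extendable (rcons l w') -> size w <= size w'.
Proof.
case=> f [bf hf].
have e1 : extendable (rcons l (f (size l))).
  exists f; split=> // i; rewrite size_rcons ltnS nth_rcons leq_eqVlt.
  by case/orP=> [/eqP ->|il]; rewrite ?ltnn ?eqxx // il hf.
have [k [[w [sw ew]] hk]] :=
  @least_witness (fun k => exists w, size w = k /\ extendable (rcons l w)) _
   (ex_intro _ _ (conj (erefl _) e1)).
by exists w; split=> // w' ew'; rewrite sw; apply: hk; exists w'.
Qed.

Definition next_shortest (l : seq (seq E)) : seq E :=
  match excluded_middle_informative (extendable l) with
  | left H => proj1_sig (constructive_indefinite_description _ (shortest_extension H))
  | right _ => [::] end.

Lemma next_shortest_spec l : extendable l ->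
  extendable (rcons l (next_shortest l)) /\
  forall w', extendable (rcons l w') -> size (next_shortest l) <= size w'.
Proof.
rewrite /next_shortest; case: excluded_middle_informative => // H _.
exact: (proj2_sig (constructive_indefinite_description _ (shortest_extension H))).
Qed.

Fixpoint minimal_prefix n :=
  if n is n'.+1 then rcons (minimal_prefix n') (next_shortest (minimal_prefix n'))
  else [::].

Lemma size_minimal_prefix n : size (minimal_prefix n) = n.
Proof. by elim: n => //= n IH; rewrite size_rcons IH. Qed.

Lemma minimal_bad_sequence : (exists f, bad f) -> exists m, bad m /\
  forall i h, bad h -> (forall k, k < i -> h k = m k) -> size (m i) <= size (h i).
Proof.
move=> bf.
have ext n : extendable (minimal_prefix n).
  by elim: n => [|n IH] /=; [case: bf => f; exists f | case: (next_shortest_spec IH)].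
pose m i := next_shortest (minimal_prefix i).
have nth_m n i : i < n -> nth [::] (minimal_prefix n) i = m i.
  elim: n => // n IH; rewrite ltnS leq_eqVlt /= nth_rcons size_minimal_prefix.
  by case/orP=> [/eqP ->|il]; rewrite ?ltnn ?eqxx // il IH.
exists m; split.
  move=> i j ij; have [g [bg hg]] := ext j.+1.
  rewrite -(nth_m j.+1 i) ?ltnS ?(ltnW ij) // -(nth_m j.+1 j) //.
  by rewrite -!hg ?size_minimal_prefix ?ltnS ?(ltnW ij) //; apply: bg.
move=> i h bh hm; have [_] := next_shortest_spec (ext i); apply.
exists h; split=> // k; rewrite size_rcons size_minimal_prefix ltnS leq_eqVlt.
rewrite nth_rcons size_minimal_prefix.
by case/orP=> [/eqP ->|kl]; rewrite ?ltnn ?eqxx // kl nth_m // hm.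
Qed.

Lemma higman : wqo (fun u w : seq E => subseq u w).
Proof.
move=> f; apply: NNPP => nf.
have [m [bm minm]] : exists m, bad m /\ forall i h, bad h ->
    (forall k, k < i -> h k = m k) -> size (m i) <= size (h i).
  apply: minimal_bad_sequence; exists f => i j ij.
  by apply/negP => s; apply: nf; exists i, j.
have mne n : m n != [::].
  by apply/eqP=> e; have := bm n n.+1 (ltnSn n); rewrite e sub0seq.
have [x0 _] : exists x0 : E, true.
  by move: (mne 0); case: (m 0) => [//|x0 _ _]; exists x0.
(* infinitely many terms start with the same letter a; drop it from them *)
have [a inf] := infinite_pigeonhole (fun n => head x0 (m n)).
have [phi [inc hphi]] := infinitely_often_subseq inf.
have phi_lt := homo_ltn ltn_trans inc.
have phi_le := homo_leq leqnn leq_trans (fun k => ltnW (inc k)).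
have mE k : m (phi k) = a :: behead (m (phi k)).
  by move: (mne (phi k)) (hphi k) => /=; case: (m (phi k)) => //= b s _ ->.
(* keeping m before phi 0 and continuing with the stripped terms m (phi k)
   is still bad, yet shorter than m at index phi 0: contradiction *)
pose h i := if i < phi 0 then m i else behead (m (phi (i - phi 0))).
have bh : bad h.
  move=> i j ij; rewrite /h.
  case: (ltnP j (phi 0)) => j0; first by rewrite (ltn_trans ij j0); apply: bm.
  case: (ltnP i (phi 0)) => i0; apply/negP => s.
    move/negP: (bm i (phi (j - phi 0)) (leq_trans i0 (phi_le _ _ (leq0n _)))); apply.
    by rewrite mE; apply: subseq_trans s (subseq_cons _ _).
  move/negP: (bm _ _ (phi_lt (i - phi 0) (j - phi 0) ltac:(lia))); apply.
  by rewrite (mE (i - phi 0)) (mE (j - phi 0)) /= eqxx.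
have agree k : k < phi 0 -> h k = m k by rewrite /h => ->.
have := minm (phi 0) h bh agree.
by rewrite /h ltnn subnn (mE 0) /=; lia.
Qed.
End Higman.

(* Anchored embedding is a wqo, by induction on the number of letters outside
   the anchor set C: either infinitely many terms are entirely allowed
   (Higman), or almost all split as B ++ a :: r at a first disallowed letter a;
   pigeonhole fixes a, and Higman on B with induction on r (anchor a |: C)
   gives a good pair. *)
Lemma wqo_anchored (E : finType) (sigma : E -> E) n (C : {set E}) :
  #|~: C| < n -> wqo (anchored sigma C).
Proof.
elim: n C => // n IH C hC f.
case: (infinitely_often_or_eventually_not (fun n => all (allowed sigma C) (f n)))
  => [inf|[N hN]].
  have [i [j [ij Pi Pj s]]] := wqo_good_pair_in f (@higman E) inf.
  exists i, j; split=> //; rewrite -(cats0 (f i)) -(cats0 (f j)).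
  by apply: anchored_prefix => //; apply: anchored_nil.
have H k := split_first_disallowed (introT negP (hN (k + N) (leq_addl _ _))).
pose dec k := proj1_sig (constructive_indefinite_description _ (H k)).
have hdec k : [/\ f (k + N) = (dec k).1.1 ++ (dec k).1.2 :: (dec k).2,
    all (allowed sigma C) (dec k).1.1 & ~~ allowed sigma C (dec k).1.2] :=
  proj2_sig (constructive_indefinite_description _ (H k)).
have [a inf] := infinite_pigeonhole (fun k => (dec k).1.2).
have [phi [inc hphi]] := infinitely_often_subseq inf.
have aC : a \notin C.
  by have [_ _] := hdec (phi 0); rewrite hphi /allowed negb_or => /andP[].
have hC' : #|~: (a |: C)| < n.
  by have := cardsC C; have := cardsC (a |: C); have := cardsU1 a C; rewrite aC; lia.
have [k [l [kl s r]]] :=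
  wqo_prod (@higman E) (@subseq_trans E) (IH _ hC')
   (fun k => (dec (phi k)).1.1) (fun k => (dec (phi k)).2).
exists (phi k + N), (phi l + N); split.
  by have := homo_ltn ltn_trans inc kl; lia.
have [-> _ _] := hdec (phi k); have [-> ok2 _] := hdec (phi l).
by rewrite !hphi; apply: anchored_prefix => //; apply: anchored_match.
Qed.

(* Finite basis property: in a wqo every subset I is covered by the upsets of
   finitely many of its elements (otherwise build an infinite bad sequence). *)
Lemma wqo_finite_basis (T : eqType) (x0 : T) (R : T -> T -> Prop) (I : T -> Prop) :
  wqo R -> exists B : seq T, {in B, forall b, I b} /\
     forall w, I w -> exists b, b \in B /\ R b w.
Proof.
move=> W; apply: NNPP => H.
have step (B : seq T) : {in B, forall b, I b} ->
    exists w, I w /\ forall b, b \in B -> ~ R b w.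
  move=> hB; apply: NNPP => h2; apply: H; exists B; split=> // w Iw.
  apply: NNPP => h3; apply: h2; exists w; split=> // b bB Rbw; apply: h3.
  by exists b.
pose nxt (B : seq T) := match excluded_middle_informative
   (exists w, I w /\ forall b, b \in B -> ~ R b w) with
  | left h => proj1_sig (constructive_indefinite_description _ h) | right _ => x0 end.
have nxt_spec (B : seq T) : {in B, forall b, I b} ->
    I (nxt B) /\ forall b, b \in B -> ~ R b (nxt B).
  move=> hB; rewrite /nxt; case: excluded_middle_informative => [h|h].
    exact: (proj2_sig (constructive_indefinite_description _ h)).
  by case: h; apply: step.
pose P := fix P n := if n is n'.+1 then rcons (P n') (nxt (P n')) else [::].
have PI n : {in P n, forall b, I b}.
  elim: n => //= n IHn b; rewrite mem_rcons in_cons => /orP[/eqP ->|/IHn //].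
  by case: (nxt_spec _ IHn).
have Pin i j : i < j -> nxt (P i) \in P j.
  elim: j => // j IHj; rewrite ltnS leq_eqVlt /= mem_rcons in_cons.
  by case/orP=> [/eqP ->|/IHj ->]; rewrite ?eqxx ?orbT.
have [i [j [ij r]]] := W (fun n => nxt (P n)).
by have [_ /(_ _ (Pin _ _ ij))] := nxt_spec _ (PI j).
Qed.

Lemma ordered_big_union (S : finType) (T : eqType) (B : seq T) (L : T -> language S) :
  (forall b, is_ordered_language (L b)) ->
  is_ordered_language (fun w => exists b, b \in B /\ L b w).
Proof.
move=> hL; elim: B => [|b B [LB hLB hLBe]].
  by exists (fun _ => False); [apply: ol_empty | move=> w; split=> // [[b []]]].
have [Lb hLb hLbe] := hL b.
exists (fun x => Lb x \/ LB x); first exact: ol_union.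
move=> w; rewrite -hLbe -hLBe; split.
  by case=> c []; rewrite in_cons => /orP[/eqP ->|cB] r; [left|right; exists c].
case=> [r|[c [cB r]]]; first by exists b; rewrite mem_head.
by exists c; rewrite in_cons cB orbT.
Qed.

Theorem mainTheorem8 (d : Order.disp_t) (E : finOrderType d) (sigma : E -> E)
  (Hsigma : OSB_involution sigma) (I : language E) :
  upward_closed (word_le sigma) I -> is_ordered_language I.
Proof.
move=> up.
have [B [BI Bcover]] :=
  wqo_finite_basis [::] I (@wqo_anchored E sigma _ set0 (ltnSn _)).
have [L hL hLe] := ordered_big_union B (fun b => anchored_upset_ordered sigma b set0).
exists L => // w; rewrite -hLe; split; first exact: Bcover.
case=> b [bB r]; apply: (up b); first exact: BI.
by apply: (anchored_word_le r (word_le_nil sigma)) => x; rewrite in_set0.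
Qed.
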